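(* For all integers $n_0\geq 3$ and $\Delta\geq 3$, there is a $\Delta$-regular graph $G$ of order $n\geq n_0$ with $$Mo(G)\geq \frac{\Delta}{2}n^2-\left(20\Delta^3+12\Delta^2-24\Delta+48\right)n\log_{(\Delta-1)}(n).$$
   Context: All graphs are finite and simple. For a graph $G$ and an edge $uv$ of $G$, $n_G(u,v)$ denotes the number of vertices of $G$ whose distance in $G$ to $u$ is smaller than their distance to $v$. The Mostar index of $G$ is $Mo(G)=\sum_{uv\in E(G)}|n_G(u,v)-n_G(v,u)|$. *)

From mathcomp Require Import all_boot.
From Stdlib Require Import Reals.

Set Implicit Arguments.
Unset Strict Implicit.
Unset Printing Implicit Defensive.

Section Graphs.
Variable T : finType.

Definition simple_graph (e : rel T) : Prop := symmetric e /\ irreflexive e.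

Definition regular (e : rel T) (Delta : nat) : Prop :=
  forall v : T, #|[set w | e v w]| = Delta.

Fixpoint ball (e : rel T) (k : nat) (x : T) : {set T} :=
  match k with
  | 0 => [set x]
  | k'.+1 => ball e k' x :|: [set y | [exists z in ball e k' x, e z y]]
  end.

(* Graph distance: Some d if y is reachable from x (d = least k with
   y in ball e k x; any finite distance is < #|T|), None = infinite. *)
Definition dist (e : rel T) (x y : T) : option nat :=
  let k := find (fun k => y \in ball e k x) (iota 0 #|T|) in
  if k < #|T| then Some k else None.

(* strict comparison of extended naturals (None = +infinity) *)
Definition olt (a b : option nat) : bool :=
  match a, b with
  | Some m, Some n => m < n
  | Some _, None => true
  | None, _ => false
  end.

Definition nG (e : rel T) (u v : T) : nat :=
  #|[set w | olt (dist e w u) (dist e w v)]|.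

Definition absdiff (a b : nat) : nat := (a - b) + (b - a).

End Graphs.

Definition mostar (n : nat) (e : rel 'I_n) : nat :=
  \sum_(u : 'I_n) \sum_(v : 'I_n | (u < v) && e u v)
     absdiff (nG e u v) (nG e v u).

(* Since n(u,v) + n(v,u) <= n, the Mostar index of a Delta-regular graph on n
   vertices is Delta n^2 / 2 minus half the total defect n - |n(u,v) - n(v,u)|
   of its oriented edges.  Let an edge xy of a bipartite graph lie in a
   subgraph U joined to the rest of the graph only by two edges a'a and b'b,
   and let every vertex outside some P containing U be strictly closer to a'
   than to b'.  By parity one end, say x, is strictly nearer to a; as shortest
   paths from outside enter U through a' or b', every vertex outside P is then
   strictly closer to x than to y, so the defect of xy is at most 2|P|.
   The graph is a stack of gadgets in which copies of the stack of depth one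
   less hang from pairs of gadget vertices, each copy satisfying these
   hypotheses with P its parent copy.  Each level of the stack contributes
   O(Delta^3 n) to the total defect, and the depth is at most log_(Delta-1) n. *)

From Pilot Require Import Defs.
From mathcomp Require Import all_boot zify.
From Stdlib Require Import Reals Lra.

Set Implicit Arguments.
Unset Strict Implicit.
Unset Printing Implicit Defensive.

Lemma find_iota0 (p : pred nat) m N :
  p m -> m < N -> (forall i, i < m -> ~~ p i) -> find p (iota 0 N) = m.
Proof.
move=> pm ltmN before_m.
rewrite -(subnKC ltmN) addSnnS iotaD add0n /= find_cat.
have -> : has p (iota 0 m) = false.
  by apply/hasP => -[i]; rewrite mem_iota add0n => /andP[_ /before_m /negPf ->].
by rewrite size_iota /= pm addn0.
Qed.

Lemma sum_nat_constT (A : finType) (c : nat) : \sum_(x : A) c = #|A| * c.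
Proof. exact: sum_nat_const. Qed.

Lemma sum_pair (A B : finType) (P : pred (A * B)) (F : A * B -> nat) :
  \sum_(x | P x) F x = \sum_a \sum_(b | P (a, b)) F (a, b).
Proof.
rewrite (pair_big_dep xpredT (fun a b => P (a, b)) (fun a b => F (a, b))).
by apply: eq_big => -[].
Qed.

Lemma sum1_eql (T : finType) (a : T) : \sum_(x | a == x) 1 = 1.
Proof. by rewrite (eq_bigl (eq_op^~ a)) ?big_pred1_eq // => x; rewrite eq_sym. Qed.

Lemma sum_indicator (T : finType) (a : T) : \sum_x (x == a : nat) = 1.
Proof. by rewrite (bigD1 a) //= eqxx big1 // => x /negbTE ->. Qed.

Lemma card_codom_set_le (A B : finType) (f : A -> B) : #|[set x in codom f]| <= #|A|.
Proof. by rewrite cardsE; apply: leq_trans (card_size _) _; rewrite size_codom. Qed.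

Lemma homo_connect (T T' : finType) (e : rel T) (e' : rel T') (f : T -> T') :
  {homo f : x y / e x y >-> e' x y} ->
  {homo f : x y / connect e x y >-> connect e' x y}.
Proof.
move=> fe x _ /connectP[p ep ->]; apply/connectP.
by exists (map f p); [exact: homo_path fe ep | rewrite last_map].
Qed.

(** * Distances and edge defects *)

Section Balls.
Variables (T : finType) (e : rel T).

Lemma ball0 x y : (y \in ball e 0 x) = (y == x).
Proof. by rewrite inE. Qed.

Lemma ballS k x y :
  (y \in ball e k.+1 x) = (y \in ball e k x) || [exists z in ball e k x, e z y].
Proof. by rewrite /= !inE. Qed.

Lemma ball_edge k x y z : y \in ball e k x -> e y z -> z \in ball e k.+1 x.
Proof.
by move=> yk yz; rewrite ballS; apply/orP; right; apply/existsP; exists y; rewrite yk.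
Qed.

Lemma ballSP k x z : z \in ball e k.+1 x ->
  z \in ball e k x \/ exists2 y, y \in ball e k x & e y z.
Proof. by rewrite ballS => /orP[|/existsP[y /andP[]]]; [left | right; exists y]. Qed.

Lemma ball_subS k x : ball e k x \subset ball e k.+1 x.
Proof. by apply/subsetP => y yk; rewrite ballS yk. Qed.

Lemma ball_trans i j x y z :
  y \in ball e i x -> z \in ball e j y -> z \in ball e (i + j) x.
Proof.
move=> yi; elim: j z => [|j IH] z; first by rewrite ball0 addn0 => /eqP ->.
rewrite addnS => /ballSP[/IH | [w /IH wj wz]]; last exact: ball_edge wz.
exact: (subsetP (ball_subS _ _)).
Qed.

Lemma ball_stable i x :
  ball e i.+1 x = ball e i x -> forall j, i <= j -> ball e j x = ball e i x.
Proof.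
move=> fix_i j /subnKC <-; elim: (j - i) => [|d IH]; first by rewrite addn0.
by rewrite addnS /= IH -[in RHS]fix_i.
Qed.

Lemma connect_ball x y : connect e x y -> exists k, y \in ball e k x.
Proof.
case/connectP=> p + ->; elim/last_ind: p => [|p z IH]; first by exists 0; rewrite ball0.
rewrite rcons_path last_rcons => /andP[/IH[k pk] pz].
by exists k.+1; apply: ball_edge pz.
Qed.

Lemma ball_entry (S : {set T}) w y k :
  w \notin S -> y \in S -> y \in ball e k w ->
  exists o r i j, [/\ o \notin S, r \in S, e o r, o \in ball e i w &
                      y \in ball e j r /\ i + j < k].
Proof.
move=> wS; elim: k y => [|k IH] y yS.
  by rewrite ball0 => /eqP yw; rewrite -yw yS in wS.
case/ballSP=> [yk | [z zk zy]].
  have [o [r [i [j [? ? ? ? [? ?]]]]]] := IH y yS yk.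
  by exists o, r, i, j; split=> //; split; [|lia].
case: (boolP (z \in S)) => zS; last by exists z, y, k, 0; rewrite ball0 eqxx addn0.
have [o [r [i [j [? ? ? ? [rj ?]]]]]] := IH z zS zk.
by exists o, r, i, j.+1; split=> //; split; [exact: ball_edge zy | lia].
Qed.

End Balls.

Lemma absdiffC m n : absdiff m n = absdiff n m.
Proof. by rewrite /absdiff addnC. Qed.

Lemma nG_disjoint (T : finType) (e : rel T) x y : nG e x y + nG e y x <= #|T|.
Proof.
rewrite /nG -cardsUI (_ : _ :&: _ = set0) ?cards0 ?addn0 ?max_card //.
apply/setP => w; rewrite !inE.
case: (Defs.dist e w x) => [a|]; case: (Defs.dist e w y) => [b|] //=.
by apply/negP => /andP[/ltn_trans lt /lt]; rewrite ltnn.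
Qed.

Definition defect (T : finType) (e : rel T) x y :=
  #|T| - absdiff (nG e x y) (nG e y x).

Lemma absdiff_add_defect (T : finType) (e : rel T) x y :
  absdiff (nG e x y) (nG e y x) + defect e x y = #|T|.
Proof. by have := nG_disjoint e x y; rewrite /defect /absdiff; lia. Qed.

Lemma defectC (T : finType) (e : rel T) x y : defect e x y = defect e y x.
Proof. by rewrite /defect absdiffC. Qed.

Section Distance.
Variables (T : finType) (e : rel T).
Hypothesis e_conn : forall x y, connect e x y.

Definition gdist x y : nat := ex_minn (connect_ball (e_conn x y)).

Lemma gdist_ball x y : y \in ball e (gdist x y) x.
Proof. by rewrite /gdist; case: ex_minnP. Qed.

Lemma gdist_min x y k : y \in ball e k x -> gdist x y <= k.
Proof. by rewrite /gdist; case: ex_minnP => m _; apply. Qed.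

Lemma gdist_lt_card x y : gdist x y < #|T|.
Proof.
suff grow k : k <= gdist x y -> k < #|ball e k x|.
  exact: leq_trans (grow _ (leqnn _)) (max_card _).
elim: k => [|k IH] le_k; first by apply/card_gt0P; exists x; rewrite ball0.
suff /proper_card : ball e k x \proper ball e k.+1 x.
  exact: leq_ltn_trans (IH (ltnW le_k)).
rewrite properEneq ball_subS andbT; apply/eqP => eq_k.
have := gdist_ball x y; rewrite (ball_stable (esym eq_k) (ltnW le_k)) => /gdist_min.
by rewrite leqNgt le_k.
Qed.

Lemma dist_gdist x y : Defs.dist e x y = Some (gdist x y).
Proof.
rewrite /Defs.dist (@find_iota0 _ (gdist x y)) ?gdist_lt_card ?gdist_ball //.
by move=> i lt_i; apply/negP => /gdist_min; rewrite leqNgt lt_i.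
Qed.

Lemma nG_gdist u v : nG e u v = #|[set w | gdist w u < gdist w v]|.
Proof. by apply: eq_card => w; rewrite !inE !dist_gdist. Qed.

Lemma gdist_triangle x y z : gdist x z <= gdist x y + gdist y z.
Proof. exact/gdist_min/ball_trans/gdist_ball/gdist_ball. Qed.

Lemma gdist_edge x y : e x y -> gdist x y <= 1.
Proof. by move=> xy; apply: gdist_min; apply: ball_edge xy; rewrite ball0. Qed.

Lemma gdist_edgeS x y z : e x y -> gdist x z <= (gdist y z).+1.
Proof.
move/gdist_edge => xy; apply: leq_trans (gdist_triangle x y z) _.
by rewrite -add1n leq_add2r.
Qed.

Lemma gdist_eq1 x y : gdist x y = 1 -> e x y.
Proof.
move=> d1; have := gdist_ball x y; rewrite d1 => /ballSP[/gdist_min | [z]].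
  by rewrite d1.
by rewrite ball0 => /eqP ->.
Qed.

Lemma gdist_entry (S : {set T}) w y : w \notin S -> y \in S ->
  exists o r, [/\ o \notin S, r \in S, e o r & gdist w o + (gdist r y).+1 <= gdist w y].
Proof.
move=> wS yS.
have [o [r [i [j [oS rS or oi [yj lt_ij]]]]]] := ball_entry wS yS (gdist_ball w y).
exists o, r; split=> //; apply: leq_trans lt_ij.
by rewrite addnS ltnS leq_add // gdist_min.
Qed.

Lemma defect_le_outside (P : {set T}) x y :
  (forall w, w \notin P -> gdist w x < gdist w y) -> defect e x y <= 2 * #|P|.
Proof.
move=> closer_x; rewrite /defect !nG_gdist.
set A := [set w | _ < _]; set B := [set w | gdist w y < _].
have : #|~: P| <= #|A|.
  by apply/subset_leq_card/subsetP => w; rewrite !inE => /closer_x.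
have : #|B| <= #|~: A|.
  by apply/subset_leq_card/subsetP => w; rewrite !inE -leqNgt => /ltnW.
have := cardsC P; have := cardsC A; rewrite /absdiff; lia.
Qed.

Section Bipartite.
Variable col : T -> bool.
Hypothesis col_edge : forall x y, e x y -> col x != col y.

Lemma col_walk3 x y z w : e x y -> e y z -> e z w -> col x != col w.
Proof.
move=> /col_edge xy /col_edge yz /col_edge zw.
by move: xy yz zw; case: (col x); case: (col y); case: (col z); case: (col w).
Qed.

Lemma ball_parity k x y : y \in ball e k x ->
  exists2 j, j <= k & y \in ball e j x /\ odd j = (col x != col y).
Proof.
elim: k y => [|k IH] y.
  by rewrite ball0 => /eqP ->; exists 0; rewrite ?ball0 ?eqxx.
case/ballSP=> [/IH[j le_jk jy] | [z /IH[j le_jk [jz odd_j]] zy]].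
  by exists j => //; apply: ltnW.
exists j.+1 => //; split; first exact: ball_edge zy.
by rewrite /= odd_j; move: (col_edge zy); case: (col x); case: (col y); case: (col z).
Qed.

Lemma odd_gdist x y : odd (gdist x y) = (col x != col y).
Proof.
have [j le_j [jy <-]] := ball_parity (gdist_ball x y).
by rewrite (@anti_leq (gdist x y) j) // le_j gdist_min.
Qed.

Lemma gdist_ge3 x y : col x != col y -> ~~ e x y -> 3 <= gdist x y.
Proof.
rewrite -odd_gdist; case dxy: (gdist x y) => [|[|[|d]]] //= _.
by rewrite gdist_eq1.
Qed.

Lemma gdist_near_lt_far p q a c y z :
  e q p -> e p a -> e q y -> e y z -> e z c -> ~~ e q c ->
  gdist p a < gdist p c /\ gdist q a < gdist q c.
Proof.
move=> qp pa qy yz zc qc.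
have := gdist_ge3 (col_walk3 qy yz zc) qc; have := gdist_edge pa.
have := gdist_edgeS a qp; have := gdist_edgeS c qp; lia.
Qed.

Section Hanging.
Variables (U : {set T}) (a b a' b' : T).
Hypothesis entry_edges : forall o r, o \notin U -> r \in U -> e o r ->
  (o = a' /\ r = a) \/ (o = b' /\ r = b).

Lemma gdist_hanging_lt z z' : z' \in U ->
  gdist a z < gdist a z' -> gdist b z < gdist b z' ->
  forall w, w \notin U -> gdist w z < gdist w z'.
Proof.
move=> z'U lt_a lt_b w wU.
have [o [r [oU rU or le_z']]] := gdist_entry wU z'U.
have := gdist_triangle w o z; have := gdist_edgeS z or.
by case: (entry_edges oU rU or) le_z' => -[-> ->]; lia.
Qed.

Variable P : {set T}.
Hypotheses (ab : e a b) (a'a : e a' a) (UP : U \subset P).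
Hypothesis outside_P : forall w, w \notin P -> gdist w a' < gdist w b'.

Lemma gdist_outside_lt x y w :
  y \in U -> w \notin P -> gdist a x < gdist a y -> gdist w x < gdist w y.
Proof.
move=> yU wP lt_xy.
have wU : w \notin U by apply: contra wP; apply: (subsetP UP).
have [o [r [oU rU or le_y]]] := gdist_entry wU yU.
have := outside_P wP; have := gdist_edgeS y ab.
have := gdist_triangle w a' x; have := gdist_edgeS x a'a.
by case: (entry_edges oU rU or) le_y => -[-> ->]; lia.
Qed.

Lemma defect_hanging_edge x y :
  x \in U -> y \in U -> e x y -> defect e x y <= 2 * #|P|.
Proof.
move=> xU yU xy.
have : gdist a x != gdist a y.
  apply/eqP => eq_d; have := odd_gdist a x; rewrite eq_d odd_gdist.
  by move: (col_edge xy); case: (col a); case: (col x); case: (col y).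
case: (ltngtP (gdist a x) (gdist a y)) => // lt_d _; last rewrite defectC.
all: by apply: defect_le_outside => w wP; apply: gdist_outside_lt.
Qed.

End Hanging.
End Bipartite.
End Distance.

(** * Relabelling and the Mostar index *)

Section Pullback.
Variables (T T' : finType) (g : T -> T') (g' : T' -> T).
Hypotheses (gK : cancel g g') (g'K : cancel g' g).
Variable e : rel T'.

Lemma ball_relpre k x y : (y \in ball (relpre g e) k x) = (g y \in ball e k (g x)).
Proof.
elim: k y => [|k IH] y; first by rewrite !ball0 (can_eq gK).
rewrite !ballS IH; congr (_ || _); apply/existsP/existsP => [[z]|[z]].
  by rewrite IH => zk; exists (g z).
by move=> zk; exists (g' z); rewrite IH /= g'K.
Qed.

Lemma dist_relpre x y : Defs.dist (relpre g e) x y = Defs.dist e (g x) (g y).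
Proof.
rewrite /Defs.dist (bij_eq_card (Bijective gK g'K)).
by under eq_find => k do rewrite ball_relpre.
Qed.

Lemma nG_relpre u v : nG (relpre g e) u v = nG e (g u) (g v).
Proof.
rewrite /nG -(card_imset _ (can_inj gK)); apply: eq_card => z.
apply/imsetP/idP => [[w + ->] | ]; rewrite !inE; first by rewrite !dist_relpre.
by move=> zuv; exists (g' z); rewrite ?g'K // inE !dist_relpre g'K.
Qed.

Lemma sum_relpre (F : T' -> T' -> nat) :
  \sum_x \sum_(y | relpre g e x y) F (g x) (g y) = \sum_x \sum_(y | e x y) F x y.
Proof.
have g_bij (P : pred T') : {on P, bijective g} by apply: onW_bij; exists g'.
rewrite [RHS](reindex g (g_bij _)); apply: eq_bigr => x _.
by rewrite [RHS](reindex g (g_bij _)).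
Qed.

End Pullback.

Lemma double_mostar n (e : rel 'I_n) : symmetric e -> irreflexive e ->
  2 * mostar e = \sum_u \sum_(v | e u v) absdiff (nG e u v) (nG e v u).
Proof.
move=> e_sym e_irr; set F := fun u v => absdiff (nG e u v) (nG e v u).
have split_v (u : 'I_n) : \sum_(v | e u v) F u v =
    \sum_(v : 'I_n | (u < v) && e u v) F u v
    + \sum_(v : 'I_n) (if (v < u) && e u v then F u v else 0).
  rewrite big_mkcond [in RHS]big_mkcond -big_split; apply: eq_bigr => v _ /=.
  by case: (ltngtP u v) => [||/val_inj <-] /=; rewrite ?e_irr ?addn0.
rewrite (eq_bigr _ (fun u _ => split_v u)) big_split exchange_big mul2n -addnn.
congr (_ + _); apply: eq_bigr => u _; rewrite [LHS]big_mkcond; apply: eq_bigr => v _.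
by rewrite e_sym /F absdiffC.
Qed.

(** * The construction *)

Notation gP s := (inl (inl (inl s))).
Notation gA s i := (inl (inl (inr (s, i)))).
Notation gX s i := (inl (inr (s, i))).
Notation gC s i := (inr (s, i)).

Section Stack.
Variable r : nat.
Local Notation K := (bool * 'I_r)%type.
Local Notation L := (bool + K + K + K)%type.

(* In the gadget the poles [gP s] have degree [r + 1], and so do the vertices
   [gA c] and [gC c] unless [leaf] holds; all other vertices have degree
   [r + 2].  The stack of depth [m.+1] is a non-leaf gadget in which, for each
   [c : K], a copy of the stack of depth [m] is attached to [gA c] by its pole
   [port0] and to [gC c] by its pole [port1]. *)
Definition gadget_adj (leaf : bool) (u v : L) : bool :=
  match u, v with
  | gP s, gP s' => s != s'
  | gP s, gA s' _ | gA s _, gP s' => s == s'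
  | gA s _, gX s' _ | gX s _, gA s' _ => s == s'
  | gX s i, gX s' i' | gX s i, gC s' i' | gC s i, gX s' i' => (s != s') && (i == i')
  | gC s _, gC s' _ => s != s'
  | gA s i, gC s' i' | gC s i, gA s' i' => [&& leaf, s == s' & i == i']
  | _, _ => false
  end.

Definition gadget_col (u : L) : bool :=
  match u with gP s | gX s _ | gC s _ => s | gA s _ => ~~ s end.

Fixpoint stack (m : nat) : finType :=
  if m is m'.+1 then (L + K * stack m')%type else L.

Definition port0 m : stack m := if m is _.+1 then inl (gP false) else gP false.
Definition port1 m : stack m := if m is _.+1 then inl (gP true) else gP true.

Definition hang_adj m (l : L) (c : K) (w : stack m) : bool :=
  if w == port0 m then l == gA c.1 c.2 else (w == port1 m) && (l == gC c.1 c.2).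

Fixpoint stack_adj m : rel (stack m) :=
  if m is m'.+1 then fun u v =>
     match u, v with
     | inl l, inl l' => gadget_adj false l l'
     | inl l, inr (c, w) | inr (c, w), inl l => hang_adj l c w
     | inr (c, w), inr (c', w') => (c == c') && stack_adj w w'
     end
  else gadget_adj true.

Fixpoint stack_col m : stack m -> bool :=
  if m is m'.+1 then fun u =>
    match u with inl l => gadget_col l | inr (c, w) => c.1 (+) stack_col w end
  else gadget_col.

Lemma gadget_adj_sym leaf : symmetric (gadget_adj leaf).
Proof.
by case=> [[[s|[s i]]|[s i]]|[s i]] [[[s'|[s' i']]|[s' i']]|[s' i']] //=;
  rewrite ?(eq_sym s) ?(eq_sym i).
Qed.

Lemma gadget_adj_irr leaf : irreflexive (gadget_adj leaf).
Proof. by case=> [[[s|[s i]]|[s i]]|[s i]] //=; rewrite eqxx ?andbF. Qed.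

Lemma gadget_col_adj leaf u v : gadget_adj leaf u v -> gadget_col u != gadget_col v.
Proof.
by case: u v => [[[s|[s i]]|[s i]]|[s i]] [[[s'|[s' i']]|[s' i']]|[s' i']] //=;
  case: s s' => [] [] //=; rewrite ?andbF.
Qed.

Lemma port0_neq1 m : port0 m != port1 m.
Proof. by case: m. Qed.

Lemma stack_adj_ports m : stack_adj (port0 m) (port1 m).
Proof. by case: m. Qed.

Lemma stack_col_port0 m : stack_col (port0 m) = false.
Proof. by case: m. Qed.

Lemma stack_col_port1 m : stack_col (port1 m) = true.
Proof. by case: m. Qed.

Lemma stack_adj_sym m : symmetric (@stack_adj m).
Proof.
elim: m => [|m IH]; first exact: gadget_adj_sym.
case=> [l|[c w]] [l'|[c' w']] //=; first exact: gadget_adj_sym.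
by rewrite eq_sym IH.
Qed.

Lemma stack_adj_irr m : irreflexive (@stack_adj m).
Proof.
elim: m => [|m IH]; first exact: gadget_adj_irr.
by case=> [l|[c w]] /=; rewrite ?gadget_adj_irr ?IH ?andbF.
Qed.

Lemma stack_col_adj m u v : @stack_adj m u v -> stack_col u != stack_col v.
Proof.
elim: m u v => [|m IH]; first exact: gadget_col_adj.
have hang_col l c w : hang_adj l c w -> gadget_col l != c.1 (+) stack_col w.
  rewrite /hang_adj; case: ifP => [/eqP-> /eqP->|_ /andP[/eqP-> /eqP->]];
  by rewrite ?stack_col_port0 ?stack_col_port1; case: c.1.
case=> [l|[[s i] w]] [l'|[[s' i'] w']] /=; first exact: gadget_col_adj.
- exact: hang_col.
- by rewrite eq_sym; apply: hang_col.
- by case/andP => /eqP[-> _] /IH; case: s'; case: (stack_col w); case: (stack_col w').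
Qed.

Definition gadget_deg (leaf : bool) (l : L) : nat :=
  match l with gP _ => r.+1 | gX _ _ => r.+2 | _ => r.+1 + leaf end.

Lemma gadget_adj_deg leaf l : \sum_(v | gadget_adj leaf l v) 1 = gadget_deg leaf l.
Proof.
rewrite !big_sumType big_mkcond big_bool !sum_pair !big_bool.
case: l => [[[[]|[[] i]]|[[] i]]|[[] i]]; case: leaf => /=;
  rewrite ?sum1_eql ?big_pred1_eq ?big_pred0_eq ?sum1_card ?card_ord; lia.
Qed.

Lemma sum_hang_adj_copy m (l : L) (c : K) :
  \sum_(w : stack m | hang_adj l c w) 1 = (l == gA c.1 c.2) + (l == gC c.1 c.2).
Proof.
have AC : (gA c.1 c.2 == gC c.1 c.2 :> L) = false by [].
rewrite /hang_adj; case: (eqVneq l (gA c.1 c.2)) => [->|_].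
  rewrite AC (eq_bigl (eq_op^~ (port0 m))) ?big_pred1_eq // => w.
  by case: eqP; rewrite ?andbF.
case: (eqVneq l (gC c.1 c.2)) => _; last first.
  by rewrite big_pred0 // => w; rewrite andbF; case: ifP.
rewrite (eq_bigl (eq_op^~ (port1 m))) ?big_pred1_eq // => w; rewrite andbT.
by case: eqP => // ->; rewrite (negbTE (port0_neq1 m)).
Qed.

Lemma sum_hang_adj_gadget m (c : K) (w : stack m) :
  \sum_(l | hang_adj l c w) 1 = (w == port0 m) + (w == port1 m).
Proof.
rewrite /hang_adj; case: eqP => [->|_].
  by rewrite big_pred1_eq (negbTE (port0_neq1 m)).
by case: eqP => _ /=; rewrite ?big_pred1_eq ?big_pred0.
Qed.

Lemma sum_copy_adj m (F : K * stack m -> nat) (c : K) (w : stack m) :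
  \sum_(q | @stack_adj m.+1 (inr (c, w)) (inr q)) F q
    = \sum_(w' | stack_adj w w') F (c, w').
Proof.
rewrite sum_pair (bigD1 c) //= eqxx [X in _ + X]big1 ?addn0 // => c' /negbTE c'c.
by rewrite big_pred0 // => w'; rewrite eq_sym c'c.
Qed.

Lemma stack_deg m u :
  \sum_(v | stack_adj u v) 1 + (u == port0 m) + (u == port1 m) = r.+2.
Proof.
elim: m u => [|m IH] u.
  by rewrite /= gadget_adj_deg; case: u => [[[[]|[[] i]]|[[] i]]|[[] i]] /=; lia.
case: u => [l|[c w]]; last first.
  by rewrite big_sumType /= sum_hang_adj_gadget sum_copy_adj -(IH w) !addn0; lia.
rewrite big_sumType /= gadget_adj_deg sum_pair.
under eq_bigr => c _ do rewrite sum_hang_adj_copy !(eq_sym l).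
rewrite sum_pair big_bool /=.
case: l => [[[[]|[[] i]]|[[] i]]|[[] i]] /=; do 5 rewrite ?eqE /=;
  rewrite ?big_split /= ?sum_indicator ?big1_eq; lia.
Qed.

Lemma sum_port_indicators m : \sum_(w : stack m) ((w == port0 m) + (w == port1 m)) = 2.
Proof. by rewrite big_split /= !sum_indicator. Qed.

Lemma gadget_connect leaf l : connect (gadget_adj leaf) l (gP false).
Proof.
have toP s : connect (gadget_adj leaf) (gP s) (gP false).
  by case: s; [exact: connect1 | exact: connect0].
have toA s i : connect (gadget_adj leaf) (gA s i) (gP false).
  by apply: connect_trans (toP s); apply: connect1; rewrite /= eqxx.
have toX s i : connect (gadget_adj leaf) (gX s i) (gP false).
  by apply: connect_trans (toA s i); apply: connect1; rewrite /= eqxx.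
case: l => [[[s|[s i]]|[s i]]|[s i]] //.
by apply: connect_trans (toX (~~ s) i); apply: connect1; rewrite /= eqxx; case: s.
Qed.

Lemma stack_connect m u : connect (@stack_adj m) u (port0 m).
Proof.
elim: m u => [|m IH] u; first exact: gadget_connect.
have gadget_part l : connect (@stack_adj m.+1) (inl l) (port0 m.+1).
  exact: (homo_connect (f := inl) (fun _ _ xy => xy) (gadget_connect false l)).
case: u => [l|[c w]]; first exact: gadget_part.
have to_port : connect (@stack_adj m.+1) (inr (c, w)) (inr (c, port0 m)).
  by apply: (homo_connect (f := fun w => inr (c, w))) (IH w) => x y xy /=; rewrite eqxx.
apply: connect_trans to_port (connect_trans _ (gadget_part (gA c.1 c.2))).
by apply: connect1; rewrite /= /hang_adj eqxx.
Qed.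

Lemma card_stackS m : #|stack m.+1| = #|{: L}| + #|{: K}| * #|stack m|.
Proof. by rewrite /= card_sum card_prod. Qed.

Lemma card_L : #|{: L}| = 6 * r + 2.
Proof. by rewrite !card_sum !card_prod card_bool card_ord; lia. Qed.

Lemma card_K : #|{: K}| = 2 * r.
Proof. by rewrite card_prod card_bool card_ord. Qed.

Lemma card_stack_ge_pow m : expn (2 * r) m <= #|stack m|.
Proof.
elim: m => [|m IH]; first by rewrite expn0; apply/card_gt0P; exists (gP false).
by rewrite card_stackS card_K expnS (leq_trans _ (leq_addl _ _)) // leq_mul2l IH orbT.
Qed.

Lemma card_stackS_le m : #|stack m.+1| <= (2 * r + 1) * #|stack m|.
Proof.
have L_le : #|{: L}| <= #|stack m| by case: m => [|m] //; rewrite card_stackS leq_addr.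
by rewrite card_stackS card_K mulnDl mul1n addnC leq_add2l.
Qed.

Section Top.
Variable h : nat.

Definition top : finType := (bool * stack h)%type.

Definition top_adj : rel top := fun x y =>
  if x.1 == y.1 then stack_adj x.2 y.2
  else ((x.2 == port0 h) && (y.2 == port0 h)) || ((x.2 == port1 h) && (y.2 == port1 h)).

Definition top_col (x : top) : bool := x.1 (+) stack_col x.2.

Lemma top_adj_sym : symmetric top_adj.
Proof.
move=> [s u] [s' u']; rewrite /top_adj /= eq_sym.
by case: (s' == s); [exact: stack_adj_sym | rewrite andbC (andbC (u == _))].
Qed.

Lemma top_adj_irr : irreflexive top_adj.
Proof. by move=> [s u]; rewrite /top_adj /= eqxx stack_adj_irr. Qed.

Lemma top_col_adj x y : top_adj x y -> top_col x != top_col y.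
Proof.
case: x y => [s u] [s' u']; rewrite /top_adj /top_col /=.
case: eqP => [->|/eqP s's].
  by move/stack_col_adj; case: s'; case: (stack_col u); case: (stack_col u').
case/orP => /andP[/eqP-> /eqP->]; rewrite ?stack_col_port0 ?stack_col_port1;
  by move: s's; case: s; case: s'.
Qed.

Lemma top_connect x y : connect top_adj x y.
Proof.
have to_base z : connect top_adj z (false, port0 h).
  case: z => s u; apply: (@connect_trans _ _ (s, port0 h)).
    apply: (homo_connect (f := pair s)) (stack_connect u) => v w vw.
    by rewrite /top_adj /= eqxx.
  by case: s; [apply: connect1; rewrite /top_adj /= !eqxx | exact: connect0].
apply: connect_trans (to_base x) _; rewrite (sym_connect_sym top_adj_sym).
exact: to_base.
Qed.

Lemma sum_join (u : stack h) :
  \sum_(u' | ((u == port0 h) && (u' == port0 h)) || ((u == port1 h) && (u' == port1 h))) 1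
    = (u == port0 h) + (u == port1 h).
Proof.
case: (eqVneq u (port0 h)) => [->|_] /=; last first.
  by case: eqP => _; rewrite ?big_pred1_eq ?big_pred0.
rewrite (negbTE (port0_neq1 h)) (eq_bigl (eq_op^~ (port0 h))) ?big_pred1_eq //.
by move=> w; rewrite orbF.
Qed.

Lemma top_deg x : \sum_(y | top_adj x y) 1 = r.+2.
Proof.
case: x => s u; rewrite sum_pair big_bool /top_adj /= -(stack_deg u).
by case: s => /=; rewrite sum_join; lia.
Qed.

Local Notation d := (gdist top_connect).

Definition hangs_from m (f : stack m -> top) (a' b' : top) :=
  [/\ forall u v, top_adj (f u) (f v) = stack_adj u v,
      forall t v, t \notin codom f -> top_adj t (f v) ->
        (t = a' /\ v = port0 m) \/ (t = b' /\ v = port1 m)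
    & top_adj a' (f (port0 m))].

Lemma pole_gdist_gA_lt_gC m (f : stack m.+1 -> top) :
  (forall u v, top_adj (f u) (f v) = stack_adj u v) ->
  forall t s i,
  d (f (inl (gP t))) (f (inl (gA s i))) < d (f (inl (gP t))) (f (inl (gC s i))).
Proof.
move=> f_adj t s i.
have [] := @gdist_near_lt_far _ _ top_connect _ top_col_adj
  (f (inl (gP s))) (f (inl (gP (~~ s)))) (f (inl (gA s i))) (f (inl (gC s i)))
  (f (inl (gA (~~ s) i))) (f (inl (gX (~~ s) i)));
  rewrite ?f_adj /= ?eqxx ?andbT //; try by case: (s).
by case: t; case: (s).
Qed.

Lemma hangs_from_copy m (f : stack m.+1 -> top) a' b' (c : K) : hangs_from f a' b' ->
  hangs_from (fun w => f (inr (c, w))) (f (inl (gA c.1 c.2))) (f (inl (gC c.1 c.2))).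
Proof.
case=> f_adj f_entry _; split=> [u v | t v t_g tv | ]; rewrite ?f_adj /= ?eqxx //.
  case: (boolP (t \in codom f)) => [/codomP[u t_u] | t_f].
    move: tv; rewrite t_u f_adj; case: u t_u t_g => [l _ _ | [c' w] -> w_g] /=.
      rewrite /hang_adj; case: ifP => [/eqP-> /eqP->|_ /andP[/eqP-> /eqP->]].
        by left.
      by right.
    by case/andP => /eqP c'c _; rewrite c'c codom_f in w_g.
  by case: (f_entry _ _ t_f tv) => -[].
by rewrite /hang_adj eqxx.
Qed.

(* A gadget vertex has at most [r + 2] edges and a copy two attaching edges;
   each of them has defect at most twice the size of the enclosing copy. *)
Definition layer_cost := r.+2 * #|{: L}| + 2 * #|{: K}|.

Section Embedded.
Variables (m : nat) (f : stack m -> top) (a' b' : top) (P : {set top}).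
Hypothesis f_hangs : hangs_from f a' b'.
Hypothesis f_P : forall u, f u \in P.
Hypothesis outside_P : forall w, w \notin P -> d w a' < d w b'.

Lemma hangs_from_entry_edges o t :
  o \notin [set x in codom f] -> t \in [set x in codom f] -> top_adj o t ->
  (o = a' /\ t = f (port0 m)) \/ (o = b' /\ t = f (port1 m)).
Proof.
case: f_hangs => _ f_entry _; rewrite !inE => o_f /codomP[v ->] ot.
by case: (f_entry _ _ o_f ot) => -[-> ->]; [left | right].
Qed.

Lemma defect_stack_edge u v : stack_adj u v -> defect top_adj (f u) (f v) <= 2 * #|P|.
Proof.
case: f_hangs => f_adj _ a'f uv.
apply: (defect_hanging_edge (e_conn := top_connect) top_col_adj hangs_from_entry_edges).
- by rewrite f_adj stack_adj_ports.
- exact: a'f.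
- by apply/subsetP => x; rewrite inE => /codomP[w ->].
- exact: outside_P.
- by rewrite inE codom_f.
- by rewrite inE codom_f.
- by rewrite f_adj.
Qed.

Lemma defect_stack_vertex u :
  \sum_(v | stack_adj u v) defect top_adj (f u) (f v) <= 2 * #|P| * r.+2.
Proof.
apply: leq_trans (_ : \sum_(v | stack_adj u v) 2 * #|P| * 1 <= _).
  by apply: leq_sum => v uv; rewrite muln1 defect_stack_edge.
by rewrite -big_distrr leq_mul2l -(stack_deg u) -addnA leq_addr orbT.
Qed.

End Embedded.

Lemma outside_gdist_gA_lt_gC m (f : stack m.+1 -> top) a' b' (c : K) :
  hangs_from f a' b' -> forall w, w \notin [set x in codom f] ->
  d w (f (inl (gA c.1 c.2))) < d w (f (inl (gC c.1 c.2))).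
Proof.
move=> f_hangs; have [f_adj _ _] := f_hangs.
apply: (gdist_hanging_lt (e_conn := top_connect) (hangs_from_entry_edges f_hangs)).
- by rewrite inE codom_f.
- exact: (pole_gdist_gA_lt_gC f_adj false).
- exact: (pole_gdist_gA_lt_gC f_adj true).
Qed.

Lemma defect_stack_le m (f : stack m -> top) a' b' (P : {set top}) :
  hangs_from f a' b' -> (forall u, f u \in P) ->
  (forall w, w \notin P -> d w a' < d w b') ->
  \sum_u \sum_(v | stack_adj u v) defect top_adj (f u) (f v)
    <= 2 * layer_cost * (#|P| + m * #|stack m.+1|).
Proof.
elim: m f a' b' P => [|m IH] f a' b' P f_hangs f_P outside_P.
  apply: leq_trans (_ : \sum_(u : stack 0) 2 * #|P| * r.+2 <= _).
    by apply: leq_sum => u _; apply: defect_stack_vertex f_hangs f_P outside_P u.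
  by rewrite sum_nat_constT /layer_cost (_ : #|stack 0| = #|{: L}|) //; nia.
have gadget_part : \sum_(l : L) \sum_(v | @stack_adj m.+1 (inl l) v)
    defect top_adj (f (inl l)) (f v) <= #|{: L}| * (2 * #|P| * r.+2).
  rewrite -sum_nat_constT; apply: leq_sum => l _.
  exact: defect_stack_vertex f_hangs f_P outside_P (inl l).
have copy_part (c : K) : \sum_w \sum_(v | @stack_adj m.+1 (inr (c, w)) v)
    defect top_adj (f (inr (c, w))) (f v)
    <= 2 * #|P| * 2 + 2 * layer_cost * (m.+1 * #|stack m.+1|).
  under eq_bigr => w _ do rewrite big_sumType /= sum_copy_adj.
  rewrite big_split /=; apply: leq_add.
    apply: leq_trans (_ : \sum_w 2 * #|P| * ((w == port0 m) + (w == port1 m)) <= _).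
      apply: leq_sum => w _; rewrite -(sum_hang_adj_gadget c w) big_distrr /=.
      apply: leq_sum => l lw.
      by rewrite muln1 (defect_stack_edge f_hangs f_P outside_P) //= lw.
    by rewrite -big_distrr /= sum_port_indicators.
  have copy_P w : f (inr (c, w)) \in [set x in codom f] by rewrite inE codom_f.
  apply: leq_trans (IH _ _ _ _ (hangs_from_copy c f_hangs) copy_P
    (outside_gdist_gA_lt_gC c f_hangs)) _.
  by rewrite leq_mul2l mulSn leq_add2r card_codom_set_le orbT.
rewrite big_sumType sum_pair.
apply: leq_trans (leq_add gadget_part (_ : _ <= \sum_(c : K) _)) _.
  by apply: leq_sum => c _; apply: copy_part.
have := card_stackS m.+1; rewrite sum_nat_constT /layer_cost.
by move: #|{: L}| #|{: K}| #|P| #|stack m.+1| #|stack m.+2| => l k p v1 v2 ->; nia.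
Qed.

Lemma hangs_from_half s : hangs_from (pair s) (~~ s, port0 h) (~~ s, port1 h).
Proof.
split=> [u v | [s' u'] v t_s | ]; rewrite /top_adj /= ?eqxx //; last by case: s.
have -> : s' = ~~ s.
  case: (eqVneq s' s) t_s => [-> | ]; first by rewrite (codom_f (pair s)).
  by case: s; case: s'.
by case: (s) => /= /orP[] /andP[/eqP-> /eqP->]; [left | right | left | right].
Qed.

Lemma defect_top_le :
  \sum_x \sum_(y | top_adj x y) defect top_adj x y
    <= 4 * layer_cost * (#|top| + h * #|stack h.+1|) + 4 * #|top|.
Proof.
have half s : \sum_u \sum_(y | top_adj (s, u) y) defect top_adj (s, u) y
    <= 2 * layer_cost * (#|top| + h * #|stack h.+1|) + 2 * #|top|.
  have split_y u : \sum_(y | top_adj (s, u) y) defect top_adj (s, u) y =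
      \sum_(u' | stack_adj u u') defect top_adj (s, u) (s, u') +
      \sum_(u' | ((u == port0 h) && (u' == port0 h)) || ((u == port1 h) && (u' == port1 h)))
         defect top_adj (s, u) (~~ s, u').
    by rewrite sum_pair big_bool /top_adj /=; case: s; rewrite // addnC.
  under eq_bigr => u _ do rewrite split_y.
  rewrite big_split /=; apply: leq_add.
    by rewrite -cardsT; apply: (defect_stack_le (hangs_from_half s)) => w; rewrite inE.
  apply: leq_trans (_ : \sum_u #|top| * ((u == port0 h) + (u == port1 h)) <= _).
    apply: leq_sum => u _; rewrite -sum_join big_distrr /=.
    by apply: leq_sum => u' _; rewrite muln1 leq_subr.
  by rewrite -big_distrr /= sum_port_indicators mulnC.
rewrite sum_pair big_bool; apply: leq_trans (leq_add (half true) (half false)) _; lia.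
Qed.

Definition top_graph : rel 'I_#|top| := relpre enum_val top_adj.

Lemma top_graph_simple : simple_graph top_graph.
Proof. by split=> [i j | i]; [apply: top_adj_sym | apply: top_adj_irr]. Qed.

Lemma top_graph_regular : regular top_graph r.+2.
Proof.
move=> i; rewrite -sum1dep_card -(top_deg (enum_val i)).
by rewrite [RHS](reindex (fun j : 'I_#|top| => enum_val j)) //; apply/onW_bij/enum_val_bij.
Qed.

Lemma mostar_add_defect :
  2 * mostar top_graph + \sum_x \sum_(y | top_adj x y) defect top_adj x y
    = #|top| * (#|top| * r.+2).
Proof.
have [e_sym e_irr] := top_graph_simple.
rewrite double_mostar // /top_graph.
under eq_bigr => i _ do under eq_bigr => j _ do rewrite !(nG_relpre enum_valK enum_rankK).
rewrite (sum_relpre enum_valK enum_rankK _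
  (fun x y => absdiff (nG top_adj x y) (nG top_adj y x))).
rewrite -big_split -sum_nat_constT; apply: eq_bigr => x _.
rewrite -big_split /= (eq_bigr (fun _ => #|top| * 1)) => [|y _].
  by rewrite -big_distrr /= top_deg.
by rewrite muln1 absdiff_add_defect.
Qed.

Lemma mostar_top_graph_ge :
  r.+2 * #|top| * #|top|
    <= 2 * mostar top_graph
       + 2 * #|top| * (2 * layer_cost + 2 + layer_cost * (2 * r + 1) * h).
Proof.
have := mostar_add_defect; have := defect_top_le; have := card_stackS_le h.
have : #|top| = 2 * #|stack h| by rewrite card_prod card_bool.
move: (mostar top_graph) (\sum_x _) => M D.
move: #|top| layer_cost #|stack h| #|stack h.+1| => n c v v1 -> le_v1 le_D eq_M.
have : c * h * v1 <= c * h * ((2 * r + 1) * v) by rewrite leq_mul2l le_v1 orbT.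
nia.
Qed.

End Top.
End Stack.

(** * The bound *)

Lemma layer_cost_bound r h : 0 < h ->
  2 * layer_cost r + 2 + layer_cost r * (2 * r + 1) * h + 24 * r.+2 * h
    <= (20 * expn r.+2 3 + 12 * expn r.+2 2 + 48) * h.
Proof. by move=> h_gt0; rewrite /layer_cost card_L card_K; nia. Qed.

Lemma INR_expn b k : INR (expn b k) = (INR b ^ k)%R.
Proof. by elim: k => [|k IH] //; rewrite expnS mult_INR IH. Qed.

Lemma le_log_of_pow b k n :
  2 <= b -> expn b k <= n -> (INR k <= ln (INR n) / ln (INR b))%R.
Proof.
move=> b_ge2 /leP/le_INR; rewrite INR_expn => pow_le.
have b_gt1 : (1 < INR b)%R by apply/lt_1_INR/ltP.
have ln_b_gt0 : (0 < ln (INR b))%R by rewrite -ln_1; apply: ln_increasing; lra.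
apply: (Rmult_le_reg_r (ln (INR b))) => //.
rewrite /Rdiv Rmult_assoc Rinv_l ?Rmult_1_r -?ln_pow; try lra.
case: (Rle_lt_or_eq_dec _ _ pow_le) => [lt | <-]; last exact: Rle_refl.
by apply/Rlt_le/ln_increasing => //; apply: pow_lt; lra.
Qed.

Lemma mostar_real_bound (D n M Q k : nat) (lg : R) :
  D * n * n <= 2 * M + 2 * n * Q ->
  Q + 24 * D * k <= (20 * expn D 3 + 12 * expn D 2 + 48) * k ->
  (INR k <= lg)%R ->
  (INR M >= INR D / 2 * INR n ^ 2
     - (20 * INR D ^ 3 + 12 * INR D ^ 2 - 24 * INR D + 48) * INR n * lg)%R.
Proof.
move=> /leP/le_INR le_M /leP/le_INR le_Q le_k.
rewrite !(mult_INR, plus_INR, INR_expn) in le_M le_Q.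
rewrite ![INR 2]/= ![INR 12]/= ![INR 20]/= ![INR 24]/= ![INR 48]/= in le_M le_Q.
set C := (20 * INR D ^ 3 + 12 * INR D ^ 2 - 24 * INR D + 48)%R.
have D_ge0 := pos_INR D; have n_ge0 := pos_INR n.
have C_ge0 : (0 <= C)%R by rewrite /C; nra.
have Q_le : (INR Q <= C * INR k)%R by rewrite /C; lra.
have : (INR n * INR Q <= INR n * (C * lg))%R.
  by apply: Rmult_le_compat_l => //; apply: Rle_trans Q_le _; apply: Rmult_le_compat_l.
lra.
Qed.

Theorem theorem1 :
  forall n0 Delta : nat, 3 <= n0 -> 3 <= Delta ->
  exists (n : nat) (e : rel 'I_n),
    n0 <= n /\ simple_graph e /\ regular e Delta /\
    (INR (mostar e) >=
       INR Delta / 2 * INR n ^ 2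
       - (20 * INR Delta ^ 3 + 12 * INR Delta ^ 2 - 24 * INR Delta + 48)
         * INR n * (ln (INR n) / ln (INR (Delta - 1))))%R.
Proof.
move=> n0 Delta n0_ge3 Delta_ge3.
have [r r_gt0 ->] : exists2 r, 0 < r & Delta = r.+2 by exists (Delta - 2); lia.
have le_pow : expn r.+1 n0 <= #|top r n0|.
  apply: (@leq_trans (expn (2 * r) n0)); first by rewrite leq_exp2r; lia.
  by rewrite card_prod card_bool; apply: leq_trans (card_stack_ge_pow r n0) (leq_pmull _ _).
exists #|top r n0|, (@top_graph r n0); split; last split; last split.
- by apply: leq_trans le_pow; apply/ltnW/ltn_expl.
- exact: top_graph_simple.
- exact: top_graph_regular.
apply: (mostar_real_bound (mostar_top_graph_ge r n0) (layer_cost_bound r _)); first lia.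
by rewrite subn1; apply: le_log_of_pow.
Qed.
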